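(* Let $x\in M$, let $\mathcal T$ be a family of $f$-induced $(D_0,\delta,\tau)$-local tilings on $W^u(x)$, and consider modified Schmidt games induced by $f$ on $W^u(x)$ with respect to $\mathcal T$. Then: (1) for any integers $a,b>a_*$, every $(a,b)$-winning set is dense in $D_0$; (2) for any integer $a>a_*$, the intersection of countably many $a$-winning sets is $a$-winning.
   Context: $M$ is a smooth compact Riemannian manifold without boundary and $f:M\to M$ a $C^{1+\theta}$ partially hyperbolic diffeomorphism (continuous $Tf$-invariant splitting $TM=E^s\oplus E^c\oplus E^u$ with $E^u$ uniformly expanded and dominating $E^c$, $E^s$ uniformly contracted and dominated by $E^c$). $W^u(x)$ is the unstable manifold through $x$ with induced distance $d^u$ and open balls $B^u(z,r)$. Constants $1<\sigma_1\le\sigma_2$ satisfy $\sigma_1\le\|T_zfv\|\le\sigma_2$ for all unit $v\in E^u_z$. Tilings: $\delta,\tau>0$ small, $D_0\subset W^u(x)$ open connected with $B^u(x_0,\frac{(1-\tau)\delta}{2})\subset D_0\subset B^u(x_0,(1+\tau)\delta)$ for some $x_0\in W^u(x)$. A family $D^i_n$ ($n\ge1$, $1\le i\le k_n$) of subsets of $W^u(x)$ is a family of $f$-induced $(D_0,\delta,\tau)$-local tilings if: (1) each $D^i_n$ is open connected with $B^u(f^n(x^i_n),\frac{(1-\tau)\delta}{2})\subset f^n(D^i_n)\subset B^u(f^n(x^i_n),(1+\tau)\delta)$ for some $x^i_n\in W^u(x)$; (2) $D^i_n\cap D^j_n=\emptyset$ for $i\ne j$; (3) $D_0\subset\bigcup_i\overline{D^i_n}$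 and $D^i_n\cap D_0\neq\emptyset$. With $\mathcal T_0=\{D_0\}$, elements of $\mathcal T_n$ are $n$-atoms, $\mathbf T_n$ their union, $\Omega=\{(z,n):z\in\mathbf T_n\}$, $\psi(z,n)$ the $n$-atom containing $z$, $(z,n)\le(z',n')$ iff $\psi(z,n)\subset\psi(z',n')$. Games: fix a positive integer $a_*$ with $(1+\tau)\delta\sigma_1^{-a_*}<(1-\tau)\delta/4$ (then each atom $\psi(z,n)$ contains an $(n+m)$-atom for all $m>a_*$). For $a,b>a_*$ and target $S\subset W^u(x)$: Bob chooses $\omega_1=(z_1,n_1)\in\Omega$; Alice chooses $\omega'_1\le\omega_1$ at level $n_1+a$; in turn $k$ Bob chooses $\omega_k\le\omega'_{k-1}$ at level $n'_{k-1}+b$, Alice chooses $\omega'_k\le\omega_k$ at level $n_k+a$. The nested atoms shrink to a unique point $z_\infty$; Alice wins iff $z_\infty\in S$. $S$ is $(a,b)$-winning if Alice has a strategy that always wins; $a$-winning if $(a,b)$-winning for every $b>a_*$. *)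

From Stdlib Require Import Reals List.
Open Scope R_scope.

(* Abstract unstable lamination of a partially hyperbolic diffeomorphism f:
   points of M, f and its inverse, the unstable-leaf relation
   (Wu y z  <->  z in W^u(y)), the leafwise induced distance d^u
   (only meaningful for points on a common leaf), and the uniform
   expansion constants 1 < sigma1 <= sigma2 integrated along leaves. *)
Record UnstableLamination := {
  pt : Type;
  fm : pt -> pt;
  fm_inv : pt -> pt;
  fm_invK : forall y, fm_inv (fm y) = y;
  fmK : forall y, fm (fm_inv y) = y;
  Wu : pt -> pt -> Prop;
  Wu_refl : forall y, Wu y y;
  Wu_sym : forall y z, Wu y z -> Wu z y;
  Wu_trans : forall y z w, Wu y z -> Wu z w -> Wu y w;
  Wu_f : forall y z, Wu y z <-> Wu (fm y) (fm z);
  du : pt -> pt -> R;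
  du_refl : forall y, du y y = 0;
  du_sym : forall y z, Wu y z -> du y z = du z y;
  du_triangle : forall y z w, Wu y z -> Wu z w -> du y w <= du y z + du z w;
  du_pos : forall y z, Wu y z -> y <> z -> 0 < du y z;
  sigma1 : R;
  sigma2 : R;
  sigma_bounds : 1 < sigma1 <= sigma2;
  du_f_bounds : forall y z, Wu y z ->
      sigma1 * du y z <= du (fm y) (fm z) <= sigma2 * du y z;
  Wu_complete : forall (y : pt) (u : nat -> pt),
      (forall n, Wu y (u n)) ->
      (forall eps, 0 < eps -> exists N, forall m n, (N <= m)%nat -> (N <= n)%nat ->
          du (u m) (u n) < eps) ->
      exists l, Wu y l /\
        (forall eps, 0 < eps -> exists N, forall n, (N <= n)%nat -> du l (u n) < eps)
}.

Section Defs.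
Variable U : UnstableLamination.

Definition fiter (n : nat) (y : pt U) : pt U := Nat.iter n (fm U) y.

Definition Bu (z : pt U) (r : R) (y : pt U) : Prop := Wu U z y /\ du U z y < r.

Definition leaf_open (A : pt U -> Prop) : Prop :=
  forall y, A y -> exists r, 0 < r /\ forall z, Bu y r z -> A z.

Definition leaf_connected (A : pt U -> Prop) : Prop :=
  forall P Q : pt U -> Prop, leaf_open P -> leaf_open Q ->
    (forall y, A y -> P y \/ Q y) ->
    (forall y, A y -> ~ (P y /\ Q y)) ->
    (exists y, A y /\ P y) -> (exists y, A y /\ Q y) -> False.

Definition leaf_closure (A : pt U -> Prop) (y : pt U) : Prop :=
  forall eps, 0 < eps -> exists z, A z /\ Wu U y z /\ du U y z < eps.

Definition initial_domain (x : pt U) (delta tau : R) (x0 : pt U)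
    (D0 : pt U -> Prop) : Prop :=
  Wu U x x0 /\ leaf_open D0 /\ leaf_connected D0 /\
  (forall y, Bu x0 ((1 - tau) * delta / 2) y -> D0 y) /\
  (forall y, D0 y -> Bu x0 ((1 + tau) * delta) y).

Definition tile (x : pt U) (delta tau : R) (n : nat) (c : pt U)
    (A : pt U -> Prop) : Prop :=
  Wu U x c /\ leaf_open A /\ leaf_connected A /\
  (forall y, A y -> Wu U x y) /\
  (forall y, Wu U x y -> du U (fiter n c) (fiter n y) < (1 - tau) * delta / 2 -> A y) /\
  (forall y, A y -> du U (fiter n c) (fiter n y) < (1 + tau) * delta).

(* Family of f-induced (D0,δ,τ)-local tilings: for n >= 1 the tiles are
   D n i for i < k n (indices shifted to start at 0), with centres xs n i. *)
Definition local_tilings (x : pt U) (delta tau : R) (D0 : pt U -> Prop)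
    (k : nat -> nat) (D : nat -> nat -> pt U -> Prop) (xs : nat -> nat -> pt U)
    : Prop :=
  forall n, (1 <= n)%nat ->
    (forall i, (i < k n)%nat -> tile x delta tau n (xs n i) (D n i)) /\
    (forall i j y, (i < k n)%nat -> (j < k n)%nat -> i <> j ->
        ~ (D n i y /\ D n j y)) /\
    (forall y, D0 y -> exists i, (i < k n)%nat /\ leaf_closure (D n i) y) /\
    (forall i, (i < k n)%nat -> exists y, D n i y /\ D0 y).

Section Game.
Variables (D0 : pt U -> Prop) (k : nat -> nat) (D : nat -> nat -> pt U -> Prop).

(* psi (z,n): the n-atom containing z (T_0 = {D0}, T_n = {D n i | i < k n}) *)
Definition psi (w : pt U * nat) (y : pt U) : Prop :=
  let (z, n) := w in
  (n = 0%nat /\ D0 z /\ D0 y) \/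
  ((1 <= n)%nat /\ exists i, (i < k n)%nat /\ D n i z /\ D n i y).

Definition Omega (w : pt U * nat) : Prop := psi w (fst w).

Definition le_atom (w w' : pt U * nat) : Prop := forall y, psi w y -> psi w' y.

(* history given to Alice before her k-th move: [β0;α0;...;β(k-1);α(k-1);βk] *)
Fixpoint hist_pre (alpha beta : nat -> pt U * nat) (j : nat) : list (pt U * nat) :=
  match j with
  | O => nil
  | S j' => hist_pre alpha beta j' ++ (beta j' :: alpha j' :: nil)
  end.

Definition hist (alpha beta : nat -> pt U * nat) (j : nat) : list (pt U * nat) :=
  hist_pre alpha beta j ++ (beta j :: nil).

Definition bob_legal (b : nat) (alpha beta : nat -> pt U * nat) (j : nat) : Prop :=
  Omega (beta j) /\
  match j with
  | O => True
  | S j' => le_atom (beta j) (alpha j') /\ snd (beta j) = (snd (alpha j') + b)%nat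
  end.

Definition alice_legal (a : nat) (alpha beta : nat -> pt U * nat) (j : nat) : Prop :=
  Omega (alpha j) /\ le_atom (alpha j) (beta j) /\ snd (alpha j) = (snd (beta j) + a)%nat.

(* Alice wins iff the limit point z_∞ of the nested atoms lies in S *)
Definition alice_wins (S : pt U -> Prop) (beta : nat -> pt U * nat) : Prop :=
  exists z, S z /\ forall j, leaf_closure (psi (beta j)) z.

Definition ab_winning (a b : nat) (S : pt U -> Prop) : Prop :=
  exists strat : list (pt U * nat) -> pt U * nat,
    forall alpha beta : nat -> pt U * nat,
      (forall j, alpha j = strat (hist alpha beta j)) ->
      (forall j, (forall i, (i <= j)%nat -> bob_legal b alpha beta i) ->
                 alice_legal a alpha beta j) /\
      ((forall j, bob_legal b alpha beta j) -> alice_wins S beta).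

Definition a_winning (astar a : nat) (S : pt U -> Prop) : Prop :=
  forall b, (astar < b)%nat -> ab_winning a b S.

End Game.

Definition dense_in (S D0 : pt U -> Prop) : Prop :=
  forall z, D0 z -> forall eps, 0 < eps ->
    exists y, S y /\ D0 y /\ Wu U z y /\ du U z y < eps.

End Defs.

From Stdlib Require Import Reals Lra Lia List Classical ClassicalEpsilon Wf_nat.
Open Scope R_scope.

(* An atom of level n has leafwise diameter O(sigma1^-n), since f^n expands
   unstable distances by at least sigma1^n while f^n of a tile is contained in a
   ball of radius (1 + tau) delta.  Hence nested plays shrink to a single point,
   and the condition on a_* lets Bob always move inside any atom in D0.
   For density, Bob opens with a small atom near the given point.  For
   intersections, Alice runs the m-th winning strategy on the moves
   2^m (2l + 1) - 1, l = 0, 1, ...; along them the levels advance by a constant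
   gap > a_*, so each is a legal game, and all of them share the limit point of
   the whole play. *)

Section Pairing.
Local Open Scope nat_scope.

(* [stage] is a bijection [nat * nat -> nat]; game [m] is played on the moves
   [stage m l], l = 0, 1, ... *)
Definition stage (m l : nat) : nat := 2 ^ m * (2 * l + 1) - 1.

Fixpoint unstage_fuel (fuel t : nat) : nat * nat :=
  match fuel with
  | O => (0, 0)
  | S f => if Nat.even t then (0, Nat.div2 t)
           else let (m, l) := unstage_fuel f (Nat.div2 t) in (S m, l)
  end.

Definition unstage (t : nat) : nat * nat := unstage_fuel (S t) t.

Lemma pow2_ge1 m : 1 <= 2 ^ m.
Proof. induction m; simpl; lia. Qed.

Lemma stage_0 l : stage 0 l = 2 * l.
Proof. unfold stage; simpl; lia. Qed.

Lemma stage_S m l : stage (S m) l = 2 * stage m l + 1.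
Proof. unfold stage. pose proof (pow2_ge1 m). simpl (2 ^ S m). nia. Qed.

Lemma stage_succ m l : stage m (S l) = stage m l + 2 ^ S m.
Proof. unfold stage. pose proof (pow2_ge1 m). simpl (2 ^ S m). nia. Qed.

Lemma stage_ge m l : l <= stage m l.
Proof. unfold stage. pose proof (pow2_ge1 m). nia. Qed.

Lemma stage_le m l l' : l <= l' -> stage m l <= stage m l'.
Proof. unfold stage. pose proof (pow2_ge1 m). nia. Qed.

Lemma stage_lt m l l' : l < l' -> stage m l < stage m l'.
Proof. unfold stage. pose proof (pow2_ge1 m). nia. Qed.

Lemma unstage_fuel_stage m : forall l fuel, stage m l < fuel -> unstage_fuel fuel (stage m l) = (m, l).
Proof.
  induction m as [|m IH]; intros l [|fuel] Hlt; try lia; simpl.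
  - rewrite stage_0, Nat.even_even, Nat.div2_even. reflexivity.
  - rewrite stage_S in Hlt |- *. rewrite Nat.even_odd, Nat.div2_odd', IH by lia. reflexivity.
Qed.

Lemma stage_unstage_fuel fuel : forall t, t < fuel ->
  stage (fst (unstage_fuel fuel t)) (snd (unstage_fuel fuel t)) = t.
Proof.
  induction fuel as [|fuel IH]; intros t Hlt; [lia|]; simpl.
  destruct (Nat.Even_or_Odd t) as [[q ->]|[q ->]].
  - rewrite Nat.even_even, Nat.div2_even, stage_0. reflexivity.
  - rewrite Nat.even_odd, Nat.div2_odd'.
    specialize (IH q ltac:(lia)). destruct (unstage_fuel fuel q) as [m l].
    simpl in *. rewrite stage_S, IH. reflexivity.
Qed.

Lemma unstage_stage m l : unstage (stage m l) = (m, l).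
Proof. apply unstage_fuel_stage; lia. Qed.

Lemma stage_unstage t : stage (fst (unstage t)) (snd (unstage t)) = t.
Proof. apply stage_unstage_fuel; lia. Qed.

End Pairing.

Section Histories.
Variable U : UnstableLamination.
Local Notation move := (pt U * nat)%type.
Local Open Scope nat_scope.

Lemma hist_pre_length (al be : nat -> move) j : length (hist_pre U al be j) = 2 * j.
Proof. induction j as [|j IH]; simpl; [reflexivity|]. rewrite length_app, IH. simpl. lia. Qed.

Lemma hist_length (al be : nat -> move) j : length (hist U al be j) = 2 * j + 1.
Proof. unfold hist. rewrite length_app, hist_pre_length. simpl. lia. Qed.

Lemma nth_hist_pre (al be : nat -> move) d j : forall i r, i < j ->
  nth (2 * i) (hist_pre U al be j ++ r) d = be i /\
  nth (2 * i + 1) (hist_pre U al be j ++ r) d = al i.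
Proof.
  induction j as [|j IH]; intros i r Hi; [lia|].
  change (hist_pre U al be (S j)) with (hist_pre U al be j ++ (be j :: al j :: nil)).
  rewrite <- app_assoc.
  destruct (Nat.eq_dec i j) as [->|Hne]; [|apply IH; lia].
  split; rewrite app_nth2, hist_pre_length by (rewrite hist_pre_length; lia).
  - rewrite Nat.sub_diag. reflexivity.
  - replace (2 * j + 1 - 2 * j) with 1 by lia. reflexivity.
Qed.

Lemma nth_hist_bob (al be : nat -> move) d j i : i <= j -> nth (2 * i) (hist U al be j) d = be i.
Proof.
  intro Hi. unfold hist. destruct (Nat.eq_dec i j) as [->|Hne]; [|apply nth_hist_pre; lia].
  rewrite app_nth2, hist_pre_length by (rewrite hist_pre_length; lia).
  rewrite Nat.sub_diag. reflexivity.
Qed.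

Lemma nth_hist_alice (al be : nat -> move) d j i : i < j -> nth (2 * i + 1) (hist U al be j) d = al i.
Proof. intro Hi. apply nth_hist_pre, Hi. Qed.

Lemma hist_ext (al be al' be' : nat -> move) j :
  (forall i, i < j -> al i = al' i) -> (forall i, i <= j -> be i = be' i) ->
  hist U al be j = hist U al' be' j.
Proof.
  intros Hal Hbe. unfold hist. rewrite (Hbe j (le_n j)). f_equal.
  assert (Hbe' : forall i, i < j -> be i = be' i) by (intros i Hi; apply Hbe; lia). clear Hbe.
  induction j as [|j IH]; simpl; [reflexivity|].
  rewrite IH, Hal, Hbe' by (intros; auto with arith). reflexivity.
Qed.

Section Play.
Variables (strat : list move -> move) (bob : move -> move) (start : move).

Fixpoint play_state (j : nat) : list move * move :=
  match j with
  | O => (nil, start)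
  | S j' => let (h, bj) := play_state j' in
            let aj := strat (h ++ bj :: nil) in (h ++ bj :: aj :: nil, bob aj)
  end.

Definition play_bob (j : nat) : move := snd (play_state j).
Definition play_alice (j : nat) : move := strat (fst (play_state j) ++ play_bob j :: nil).

Lemma play_state_hist j : fst (play_state j) = hist_pre U play_alice play_bob j.
Proof.
  induction j as [|j IH]; simpl; [reflexivity|].
  rewrite <- IH. unfold play_alice, play_bob. destruct (play_state j). reflexivity.
Qed.

Lemma play_alice_hist j : play_alice j = strat (hist U play_alice play_bob j).
Proof. unfold hist. rewrite <- play_state_hist. reflexivity. Qed.

Lemma play_bob_S j : play_bob (S j) = bob (play_alice j).
Proof. unfold play_alice, play_bob; simpl. destruct (play_state j). reflexivity. Qed.

End Play.

Definition subplay (m : nat) (w : nat -> move) : nat -> move := fun l => w (stage m l).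

(* Alice's answer at move [stage m l] is the [m]-th strategy applied to the
   subhistory of moves [stage m 0, ..., stage m l]; [d] is a dummy default. *)
Definition interleave (d : move) (strats : nat -> list move -> move) (h : list move) : move :=
  let (m, l) := unstage (Nat.div2 (length h)) in
  strats m (hist U (fun l' => nth (2 * stage m l' + 1) h d) (fun l' => nth (2 * stage m l') h d) l).

Lemma interleave_subplay d strats (al be : nat -> move) :
  (forall j, al j = interleave d strats (hist U al be j)) ->
  forall m l, al (stage m l) = strats m (hist U (subplay m al) (subplay m be) l).
Proof.
  intros Hcons m l. rewrite Hcons. unfold interleave.
  rewrite hist_length, Nat.div2_odd', unstage_stage.
  f_equal. apply hist_ext; unfold subplay.
  - intros i Hi. apply nth_hist_alice, stage_lt, Hi.
  - intros i Hi. apply nth_hist_bob, stage_le, Hi.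
Qed.

End Histories.

Section Lamination.
Variable U : UnstableLamination.

Lemma fiter_Wu n y z : Wu U y z -> Wu U (fiter U n y) (fiter U n z).
Proof. intro Hyz. induction n as [|n IH]; [exact Hyz|]. exact (proj1 (Wu_f U _ _) IH). Qed.

Lemma fiter_add m n y : fiter U (m + n) y = fiter U m (fiter U n y).
Proof. apply Nat.iter_add. Qed.

Lemma du_fiter_bounds n y z : Wu U y z ->
  sigma1 U ^ n * du U y z <= du U (fiter U n y) (fiter U n z) <= sigma2 U ^ n * du U y z.
Proof.
  intro Hyz. pose proof (sigma_bounds U) as Hs.
  induction n as [|n [IH1 IH2]]; [simpl; lra|].
  destruct (du_f_bounds U _ _ (fiter_Wu n _ _ Hyz)) as [H1 H2].
  change (fiter U (S n) ?w) with (fm U (fiter U n w)). simpl pow. rewrite !Rmult_assoc.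
  split.
  - apply Rle_trans with (sigma1 U * du U (fiter U n y) (fiter U n z)); [|exact H1].
    apply Rmult_le_compat_l; lra.
  - apply Rle_trans with (sigma2 U * du U (fiter U n y) (fiter U n z)); [exact H2|].
    apply Rmult_le_compat_l; lra.
Qed.

Lemma du_triangle3 y1 y2 y3 y4 : Wu U y1 y2 -> Wu U y2 y3 -> Wu U y3 y4 ->
  du U y1 y4 <= du U y1 y2 + du U y2 y3 + du U y3 y4.
Proof.
  intros H12 H23 H34.
  pose proof (du_triangle U y1 y2 y3 H12 H23).
  pose proof (du_triangle U y1 y3 y4 (Wu_trans U _ _ _ H12 H23) H34). lra.
Qed.

Lemma inv_sigma1_pow_le m n : (m <= n)%nat -> (/ sigma1 U) ^ n <= (/ sigma1 U) ^ m.
Proof.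
  intro Hmn. pose proof (sigma_bounds U). rewrite !pow_inv.
  apply Rinv_le_contravar; [apply pow_lt; lra|apply Rle_pow; [lra|exact Hmn]].
Qed.

Lemma inv_sigma1_pow_small C eps : 0 < C -> 0 < eps ->
  exists N, forall n, (N <= n)%nat -> C * (/ sigma1 U) ^ n < eps.
Proof.
  intros HC Heps. pose proof (sigma_bounds U) as Hs.
  assert (Hinv : 0 < / sigma1 U < 1)
    by (split; [apply Rinv_0_lt_compat|rewrite <- Rinv_1; apply Rinv_lt_contravar]; lra).
  destruct (pow_lt_1_zero (/ sigma1 U)) with (eps / C) as [N HN];
    [rewrite Rabs_pos_eq; lra|apply Rdiv_lt_0_compat; assumption|].
  exists N. intros n Hn. specialize (HN n Hn).
  rewrite Rabs_pos_eq in HN by (apply pow_le; lra).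
  apply Rmult_lt_compat_l with (r := C) in HN; [|exact HC].
  replace (C * (eps / C)) with eps in HN by (field; lra). exact HN.
Qed.

Lemma lt_mul_inv_sigma1_pow n K d : sigma1 U ^ n * d < K -> d < K * (/ sigma1 U) ^ n.
Proof.
  intro H. pose proof (sigma_bounds U).
  assert (0 < sigma1 U ^ n) by (apply pow_lt; lra).
  rewrite pow_inv. apply Rmult_lt_reg_l with (sigma1 U ^ n); [assumption|].
  replace (sigma1 U ^ n * (K * / sigma1 U ^ n)) with K by (field; lra). exact H.
Qed.

End Lamination.

Section Tilings.
Variable U : UnstableLamination.
Variables (x : pt U) (delta tau : R) (D0 : pt U -> Prop) (k : nat -> nat)
  (D : nat -> nat -> pt U -> Prop) (xs : nat -> nat -> pt U).
Hypothesis HT : local_tilings U x delta tau D0 k D xs.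
Hypothesis Hdelta : 0 < delta.
Hypothesis Htau : 0 < tau < 1.

Local Notation psi := (psi U D0 k D).
Local Notation Omega := (Omega U D0 k D).
Local Notation le_atom := (le_atom U D0 k D).

Lemma le_atom_refl w : le_atom w w.
Proof. intros y Hy; exact Hy. Qed.

Lemma le_atom_trans u v w : le_atom u v -> le_atom v w -> le_atom u w.
Proof. intros Huv Hvw y Hy. exact (Hvw y (Huv y Hy)). Qed.

Lemma leaf_closure_le_atom u v y : le_atom u v -> leaf_closure U (psi u) y -> leaf_closure U (psi v) y.
Proof.
  intros Huv Hcl eps Heps. destruct (Hcl eps Heps) as [z [Hz Hyz]]. exists z. split; [exact (Huv z Hz)|exact Hyz].
Qed.

Lemma tiling_tile n i : (1 <= n)%nat -> (i < k n)%nat -> tile U x delta tau n (xs n i) (D n i).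
Proof. intros Hn Hi. exact (proj1 (HT n Hn) i Hi). Qed.

Lemma tile_center_mem n i : (1 <= n)%nat -> (i < k n)%nat -> D n i (xs n i).
Proof.
  intros Hn Hi. destruct (tiling_tile n i Hn Hi) as (Hc & _ & _ & _ & Hball & _).
  apply Hball; [exact Hc|]. rewrite du_refl. nra.
Qed.

Lemma tile_image_diam n i p y y' : (1 <= n)%nat -> (i < k n)%nat -> (p <= n)%nat ->
  D n i y -> D n i y' ->
  Wu U (fiter U p y) (fiter U p y') /\
  du U (fiter U p y) (fiter U p y') < 2 * (1 + tau) * delta * (/ sigma1 U) ^ (n - p).
Proof.
  intros Hn Hi Hp Hy Hy'.
  destruct (tiling_tile n i Hn Hi) as (Hc & _ & _ & Hleaf & _ & Hsmall).
  assert (Hcu : forall u, D n i u -> Wu U (fiter U n (xs n i)) (fiter U n u))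
    by (intros u Hu; apply fiter_Wu, Wu_trans with x; [apply Wu_sym|apply Hleaf]; assumption).
  assert (Wyy : Wu U y y') by (apply Wu_trans with x; [apply Wu_sym|]; apply Hleaf; assumption).
  split; [apply fiter_Wu, Wyy|].
  apply lt_mul_inv_sigma1_pow.
  assert (Hsplit : forall u, fiter U (n - p) (fiter U p u) = fiter U n u)
    by (intro u; rewrite <- fiter_add; f_equal; lia).
  destruct (du_fiter_bounds U (n - p) _ _ (fiter_Wu U p _ _ Wyy)) as [Hexp _].
  rewrite !Hsplit in Hexp.
  pose proof (du_triangle U _ _ _ (Wu_sym U _ _ (Hcu y Hy)) (Hcu y' Hy')).
  rewrite <- (du_sym U _ _ (Hcu y Hy)) in H.
  pose proof (Hsmall y Hy). pose proof (Hsmall y' Hy'). lra.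
Qed.

Lemma atom_diam w y y' : (1 <= snd w)%nat -> psi w y -> psi w y' ->
  Wu U y y' /\ du U y y' < 4 * (1 + tau) * delta * (/ sigma1 U) ^ snd w.
Proof.
  destruct w as [z n]; simpl.
  intros Hn [[? _]|[_ [i [Hi [Hz Hy]]]]] [[? _]|[_ [i' [Hi' [Hz' Hy']]]]]; try lia.
  destruct (tile_image_diam n i 0 z y) as [W1 E1]; try assumption; [lia|].
  destruct (tile_image_diam n i' 0 z y') as [W2 E2]; try assumption; [lia|].
  rewrite Nat.sub_0_r in E1, E2. simpl in W1, W2, E1, E2.
  split; [apply Wu_trans with z; [apply Wu_sym|]; assumption|].
  pose proof (du_triangle U y z y' (Wu_sym U _ _ W1) W2).
  rewrite (du_sym U y z) in H by (apply Wu_sym; exact W1). lra.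
Qed.

Lemma atom_limit_unique (be : nat -> pt U * nat) z z' :
  (forall t, (t <= snd (be t))%nat) ->
  (forall t, leaf_closure U (psi (be t)) z) -> (forall t, leaf_closure U (psi (be t)) z') ->
  z = z'.
Proof.
  intros Hlev Hz Hz'.
  assert (Wzz : Wu U z z').
  { destruct (Hz 1%nat 1 Rlt_0_1) as [y [Hy [Wy _]]].
    destruct (Hz' 1%nat 1 Rlt_0_1) as [y' [Hy' [Wy' _]]].
    destruct (atom_diam (be 1%nat) y y') as [Wyy _]; [apply Hlev|assumption|assumption|].
    apply Wu_trans with y; [exact Wy|]. apply Wu_trans with y'; [exact Wyy|apply Wu_sym, Wy']. }
  apply NNPP. intro Hne. pose proof (du_pos U z z' Wzz Hne) as Hd.
  destruct (inv_sigma1_pow_small U (4 * (1 + tau) * delta) (du U z z' / 3)) as [N HN]; [nra|lra|].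
  assert (Hlev1 : (1 <= snd (be (S N)))%nat) by (specialize (Hlev (S N)); lia).
  assert (Hsmall := HN (snd (be (S N))) ltac:(specialize (Hlev (S N)); lia)).
  assert (Hd3 : 0 < du U z z' / 3) by lra.
  destruct (Hz (S N) _ Hd3) as [u [Hu [Wu1 Eu]]].
  destruct (Hz' (S N) _ Hd3) as [u' [Hu' [Wu2 Eu']]].
  destruct (atom_diam (be (S N)) u u' Hlev1 Hu Hu') as [Wuu Euu].
  pose proof (du_triangle3 U z u u' z' Wu1 Wuu (Wu_sym U _ _ Wu2)).
  rewrite (du_sym U u' z') in H by (apply Wu_sym; exact Wu2). lra.
Qed.

Section Subatoms.
Variables (astar b : nat).
Hypothesis Hastar : (1 + tau) * delta * / sigma1 U ^ astar < (1 - tau) * delta / 4.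
Hypothesis Hb : (astar < b)%nat.

(* The tile [b] levels deeper that meets the centre [c] of the tile of [w] lies
   inside it: under [f^m] it stays within [(1 - tau) delta / 2] of [f^m c]. *)
Lemma exists_subatom w : Omega w -> (1 <= snd w)%nat -> (forall y, psi w y -> D0 y) ->
  exists v, Omega v /\ le_atom v w /\ snd v = (snd w + b)%nat.
Proof.
  intros Hw Hm HD0. destruct w as [z m]. simpl in Hm |- *.
  destruct Hw as [[? _]|[_ [i [Hi [Hz _]]]]]; [lia|].
  set (c := xs m i).
  assert (Hc : D m i c) by (apply tile_center_mem; assumption).
  assert (Hmb : (1 <= m + b)%nat) by lia.
  destruct (HT (m + b)%nat Hmb) as (_ & Hdisj & Hcov & _).
  destruct (Hcov c (HD0 c (or_intror (conj Hm (ex_intro _ i (conj Hi (conj Hz Hc))))))) as [j [Hj Hcl]].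
  pose proof (sigma_bounds U) as Hs.
  assert (Hdeep : 2 * (1 + tau) * delta * (/ sigma1 U) ^ b < (1 - tau) * delta / 2).
  { pose proof Hastar as Hst. rewrite <- pow_inv in Hst.
    assert (2 * (1 + tau) * delta * (/ sigma1 U) ^ b <= 2 * (1 + tau) * delta * (/ sigma1 U) ^ astar)
      by (apply Rmult_le_compat_l; [nra|apply inv_sigma1_pow_le; lia]).
    lra. }
  set (eta := (1 - tau) * delta / 2 - 2 * (1 + tau) * delta * (/ sigma1 U) ^ b).
  assert (Hs2 : 0 < sigma2 U ^ m) by (apply pow_lt; lra).
  destruct (Hcl (eta / sigma2 U ^ m)) as [w' [Dw' [Wcw' Ecw']]];
    [apply Rdiv_lt_0_compat; unfold eta; lra|].
  exists (w', (m + b)%nat). split; [right; split; [exact Hmb|exists j; auto]|split; [|reflexivity]].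
  intros y [[? _]|[_ [i' [Hi' [Hw'i' Hy]]]]]; [lia|].
  assert (i' = j) as ->.
  { destruct (Nat.eq_dec i' j) as [|Hne]; [assumption|].
    exfalso. exact (Hdisj i' j w' Hi' Hj Hne (conj Hw'i' Dw')). }
  right. split; [exact Hm|exists i; split; [exact Hi|split; [exact Hz|]]].
  destruct (tiling_tile m i Hm Hi) as (_ & _ & _ & _ & Hball & _).
  destruct (tiling_tile (m + b) j Hmb Hj) as (_ & _ & _ & Hleaf & _ & _).
  apply Hball; [apply Hleaf, Hy|].
  destruct (tile_image_diam (m + b) j m w' y) as [W2 E2]; try assumption; [lia|].
  replace (m + b - m)%nat with b in E2 by lia.
  pose proof (du_fiter_bounds U m c w' Wcw') as [_ Hexp].
  assert (sigma2 U ^ m * du U c w' < eta).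
  { apply Rmult_lt_compat_l with (r := sigma2 U ^ m) in Ecw'; [|exact Hs2].
    replace (sigma2 U ^ m * (eta / sigma2 U ^ m)) with eta in Ecw' by (field; lra). exact Ecw'. }
  pose proof (du_triangle U _ _ _ (fiter_Wu U m _ _ Wcw') W2).
  unfold eta in *. fold c. lra.
Qed.

Lemma bob_response : exists bob : pt U * nat -> pt U * nat, forall v,
  Omega v -> (1 <= snd v)%nat -> (forall y, psi v y -> D0 y) ->
  Omega (bob v) /\ le_atom (bob v) v /\ snd (bob v) = (snd v + b)%nat.
Proof.
  apply (choice (fun v u => Omega v -> (1 <= snd v)%nat -> (forall y, psi v y -> D0 y) ->
                   Omega u /\ le_atom u v /\ snd u = (snd v + b)%nat)).
  intro v. destruct (classic (Omega v /\ (1 <= snd v)%nat /\ forall y, psi v y -> D0 y))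
    as [(Hv & Hlev & Hsub)|Hnot].
  - destruct (exists_subatom v Hv Hlev Hsub) as [u Hu]. exists u. intros _ _ _. exact Hu.
  - exists v. intros Hv Hlev Hsub. exfalso. exact (Hnot (conj Hv (conj Hlev Hsub))).
Qed.

End Subatoms.

Lemma small_atom_near z rho : D0 z -> 0 < rho ->
  exists w, Omega w /\ (1 <= snd w)%nat /\ forall y, psi w y -> Wu U z y /\ du U z y < 2 * rho.
Proof.
  intros Hz Hrho.
  destruct (inv_sigma1_pow_small U (4 * (1 + tau) * delta) rho) as [N HN]; [nra|exact Hrho|].
  destruct (HT (S N) ltac:(lia)) as (_ & _ & Hcov & _).
  destruct (Hcov z Hz) as [i [Hi Hcl]].
  destruct (Hcl rho Hrho) as [w [Dw [Wzw Ezw]]].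
  assert (Hw : psi (w, S N) w) by (right; split; [lia|exists i; auto]).
  exists (w, S N). split; [exact Hw|split; [simpl; lia|]].
  intros y Hy.
  destruct (atom_diam (w, S N) w y) as [Wwy Ewy]; [simpl; lia|exact Hw|exact Hy|].
  specialize (HN (S N) (Nat.le_succ_diag_r N)). simpl snd in Ewy.
  split; [apply Wu_trans with w; assumption|].
  pose proof (du_triangle U _ _ _ Wzw Wwy). lra.
Qed.

(* Bob opens with [w0] and always answers inside Alice's atom. *)
Lemma ab_winning_meets_atom astar a b A w0 :
  (1 + tau) * delta * / sigma1 U ^ astar < (1 - tau) * delta / 4 -> (astar < b)%nat ->
  Omega w0 -> (1 <= snd w0)%nat -> (forall y, psi w0 y -> D0 y) ->
  ab_winning U D0 k D a b A -> exists z, A z /\ leaf_closure U (psi w0) z.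
Proof.
  intros Hastar Hb Hw0 Hlev0 Hsub [strat Hstrat].
  destruct (bob_response astar b Hastar Hb) as [bob Hbob].
  set (al := play_alice U strat bob w0). set (be := play_bob U strat bob w0).
  destruct (Hstrat al be (play_alice_hist U strat bob w0)) as [Hleg Hwin].
  assert (Hinv : forall j, (forall i, (i <= j)%nat -> bob_legal U D0 k D b al be i) /\
                   le_atom (be j) w0 /\ (1 <= snd (be j))%nat).
  { induction j as [|j [IHleg [IHin IHlev]]].
    - split; [intros i Hi; replace i with 0%nat by lia; split; [exact Hw0|exact I]|].
      split; [apply le_atom_refl|exact Hlev0].
    - destruct (Hleg j IHleg) as (Ha1 & Ha2 & Ha3).
      assert (Hin : le_atom (al j) w0) by (apply le_atom_trans with (be j); assumption).
      destruct (Hbob (al j) Ha1 ltac:(lia) (fun y Hy => Hsub y (Hin y Hy))) as (Hb1 & Hb2 & Hb3).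
      assert (Hbe : be (S j) = bob (al j)) by apply play_bob_S.
      split; [|rewrite Hbe; split; [apply le_atom_trans with (al j); assumption|lia]].
      intros i Hi. destruct (Nat.eq_dec i (S j)) as [->|Hne]; [|apply IHleg; lia].
      unfold bob_legal. rewrite Hbe. split; [exact Hb1|split; [exact Hb2|exact Hb3]]. }
  destruct Hwin as [z [Hz Hcl]]; [intro j; exact (proj1 (Hinv j) j (le_n j))|].
  exists z. split; [exact Hz|exact (Hcl 0%nat)].
Qed.

Lemma dense_of_ab_winning astar a b A : leaf_open U D0 ->
  (1 + tau) * delta * / sigma1 U ^ astar < (1 - tau) * delta / 4 -> (astar < b)%nat ->
  ab_winning U D0 k D a b A -> dense_in U A D0.
Proof.
  intros HD0 Hastar Hb Hwin z Hz eps Heps.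
  destruct (HD0 z Hz) as [r [Hr Hball]].
  set (rho := Rmin r eps / 4).
  assert (Hrho : 0 < rho) by (apply Rdiv_lt_0_compat; [apply Rmin_glb_lt|]; lra).
  assert (Hrho_r : 4 * rho <= r) by (pose proof (Rmin_l r eps); unfold rho; lra).
  assert (Hrho_eps : 4 * rho <= eps) by (pose proof (Rmin_r r eps); unfold rho; lra).
  destruct (small_atom_near z rho Hz Hrho) as [w0 (Hw0 & Hlev0 & Hnear)].
  assert (Hsub : forall y, psi w0 y -> D0 y).
  { intros y Hy. destruct (Hnear y Hy). apply Hball. split; [assumption|lra]. }
  destruct (ab_winning_meets_atom astar a b A w0 Hastar Hb Hw0 Hlev0 Hsub Hwin) as [zi [HAz Hcl]].
  destruct (Hcl rho Hrho) as [y [Hy [Wzi Ezi]]].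
  destruct (Hnear y Hy) as [Wzy Ezy].
  assert (Wz : Wu U z zi) by (apply Wu_trans with y; [|apply Wu_sym]; assumption).
  pose proof (du_triangle U z y zi Wzy (Wu_sym U _ _ Wzi)).
  rewrite <- (du_sym U _ _ Wzi) in H.
  exists zi. split; [exact HAz|split; [apply Hball; split; [exact Wz|lra]|split; [exact Wz|lra]]].
Qed.

Lemma bob_move_after a b (al be : nat -> pt U * nat) s0 e :
  (forall s, (s0 <= s < s0 + S e)%nat -> alice_legal U D0 k D a al be s) ->
  (forall s, (s0 < s <= s0 + S e)%nat -> bob_legal U D0 k D b al be s) ->
  le_atom (be (s0 + S e)%nat) (al s0) /\
  snd (be (s0 + S e)%nat) = (snd (al s0) + b + e * (a + b))%nat.
Proof.
  intros HA HB. induction e as [|e IH].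
  - rewrite Nat.add_1_r. destruct (HB (S s0) ltac:(lia)) as (_ & H1 & H2). split; [exact H1|lia].
  - destruct IH as [IH1 IH2]; [intros; apply HA; lia|intros; apply HB; lia|].
    replace (s0 + S (S e))%nat with (S (s0 + S e)) by lia.
    destruct (HB (S (s0 + S e)) ltac:(lia)) as (_ & H1 & H2).
    destruct (HA (s0 + S e)%nat ltac:(lia)) as (_ & H3 & H4).
    split; [|lia].
    apply le_atom_trans with (al (s0 + S e)%nat); [exact H1|].
    apply le_atom_trans with (be (s0 + S e)%nat); assumption.
Qed.

Section LegalPlay.
Variables (a b : nat) (al be : nat -> pt U * nat).
Hypothesis HA : forall s, alice_legal U D0 k D a al be s.
Hypothesis HB : forall s, bob_legal U D0 k D b al be s.

Lemma bob_moves_nested t t' : (t <= t')%nat -> le_atom (be t') (be t).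
Proof.
  intro Htt. destruct (Nat.eq_dec t t') as [<-|Hne]; [apply le_atom_refl|].
  replace t' with (t + S (t' - t - 1))%nat by lia.
  apply le_atom_trans with (al t); [|apply HA].
  apply (bob_move_after a b); intros; [apply HA|apply HB].
Qed.

Lemma bob_level_ge : (1 <= b)%nat -> forall t, (t <= snd (be t))%nat.
Proof.
  intros Hb t. induction t as [|t IH]; [lia|].
  destruct (HB (S t)) as (_ & _ & H1). destruct (HA t) as (_ & _ & H2). lia.
Qed.

End LegalPlay.

(* Between consecutive moves [stage m l] and [stage m (S l)] there are
   [2 ^ S m - 1] full rounds, so the levels grow by exactly this gap. *)
Definition subgame_gap (a b m : nat) : nat := (b + (2 ^ S m - 1) * (a + b))%nat.

Lemma subplay_bob_legal a b m l (al be : nat -> pt U * nat) :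
  (forall s, (s <= stage m l)%nat -> bob_legal U D0 k D b al be s) ->
  (forall s, (s < stage m l)%nat -> alice_legal U D0 k D a al be s) ->
  forall i, (i <= l)%nat -> bob_legal U D0 k D (subgame_gap a b m) (subplay U m al) (subplay U m be) i.
Proof.
  intros HB HA [|i] Hi.
  - split; [apply (HB (stage m 0)), stage_le; lia|exact I].
  - assert (Hle : (stage m (S i) <= stage m l)%nat) by (apply stage_le; exact Hi).
    split; [exact (proj1 (HB _ Hle))|].
    unfold subplay. rewrite stage_succ in Hle |- *. pose proof (pow2_ge1 (S m)).
    replace (2 ^ S m)%nat with (S (2 ^ S m - 1)) by lia.
    destruct (bob_move_after a b al be (stage m i) (2 ^ S m - 1)%nat) as [H1 H2];
      [intros s Hs; apply HA; lia|intros s Hs; apply HB; lia|].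
    split; [exact H1|]. rewrite H2. unfold subgame_gap. lia.
Qed.

Lemma a_winning_countable_inter astar a (W : nat -> pt U -> Prop) :
  (forall m, a_winning U D0 k D astar a (W m)) ->
  a_winning U D0 k D astar a (fun y => forall m, W m y).
Proof.
  intros HW b Hb.
  assert (Hgap : forall m, ab_winning U D0 k D a (subgame_gap a b m) (W m))
    by (intro m; apply HW, Nat.lt_le_trans with b, Nat.le_add_r; exact Hb).
  destruct (choice _ Hgap) as [strats Hstrats].
  exists (interleave U (x, 0%nat) strats). intros al be Hcons.
  pose proof (interleave_subplay U _ _ _ _ Hcons) as Hsub.
  assert (Hleg : forall j, (forall i, (i <= j)%nat -> bob_legal U D0 k D b al be i) ->
                   alice_legal U D0 k D a al be j).
  { intro j. induction j as [j IH] using (well_founded_induction lt_wf). intro HBj.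
    pose proof (stage_unstage j) as Hj. destruct (unstage j) as [m l]. simpl in Hj. subst j.
    destruct (Hstrats m _ _ (Hsub m)) as [Hlegm _].
    apply (Hlegm l), subplay_bob_legal.
    - intros s Hs. apply HBj, Hs.
    - intros s Hs. apply IH; [exact Hs|]. intros i Hi. apply HBj. lia. }
  split; [exact Hleg|]. intro HB.
  assert (HA : forall s, alice_legal U D0 k D a al be s) by (intro s; apply Hleg; intros; apply HB).
  assert (Hlim : forall m, exists z, W m z /\ forall t, leaf_closure U (psi (be t)) z).
  { intro m. destruct (Hstrats m _ _ (Hsub m)) as [_ Hwin].
    destruct Hwin as [z [Hz Hcl]]; [intro l; apply (subplay_bob_legal a b m l); auto|].
    exists z. split; [exact Hz|]. intro t.
    apply leaf_closure_le_atom with (be (stage m t)); [|exact (Hcl t)].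
    apply (bob_moves_nested a b al be HA HB), stage_ge. }
  destruct (Hlim 0%nat) as [z [_ Hcl]].
  exists z. split; [|exact Hcl]. intro m.
  destruct (Hlim m) as [z' [Hz' Hcl']].
  replace z with z'; [exact Hz'|].
  apply (atom_limit_unique be); [|exact Hcl'|exact Hcl].
  apply (bob_level_ge a b al be HA HB). lia.
Qed.

End Tilings.

Theorem proposition2p8 :
  forall (U : UnstableLamination) (x : pt U) (delta tau : R) (x0 : pt U)
    (D0 : pt U -> Prop) (k : nat -> nat) (D : nat -> nat -> pt U -> Prop)
    (xs : nat -> nat -> pt U) (astar : nat),
    0 < delta -> 0 < tau < 1 ->
    initial_domain U x delta tau x0 D0 ->
    local_tilings U x delta tau D0 k D xs ->
    (1 <= astar)%nat ->
    (1 + tau) * delta * / (sigma1 U ^ astar) < (1 - tau) * delta / 4 ->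
    (forall (a b : nat) (S : pt U -> Prop),
        (astar < a)%nat -> (astar < b)%nat ->
        ab_winning U D0 k D a b S -> dense_in U S D0) /\
    (forall (a : nat) (S : nat -> pt U -> Prop),
        (astar < a)%nat ->
        (forall m, a_winning U D0 k D astar a (S m)) ->
        a_winning U D0 k D astar a (fun y => forall m, S m y)).
Proof.
  intros U x delta tau x0 D0 k D xs astar Hdelta Htau (_ & HD0 & _) HT _ Hastar.
  split.
  - intros a b S _ Hb.
    exact (dense_of_ab_winning U x delta tau D0 k D xs HT Hdelta Htau astar a b S HD0 Hastar Hb).
  - intros a S _.
    exact (a_winning_countable_inter U x delta tau D0 k D xs HT Hdelta Htau astar a S).
Qed.
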